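(* For $i\in\{1,2\}$ let $G_i=(V_i,E_i)$ be finite connected graphs with $n_i=|V_i|\ge 2$, $V_1\cap V_2=\emptyset$, and let $u\in V_1$, $v\in V_2$. Let $G$ be the graph with vertex set $V_1\cup V_2$ and edge set $E_1\cup E_2\cup\{\{u,v\}\}$. Let $D_1,D_2,D_G$ be the distance matrices of $G_1,G_2,G$. Assume: (C2) $D_1$ and $D_2$ are invertible, and let $K_{G_i}=n_iD_i^{-1}\mathbf{1}_{n_i}$ be the Steinerberger curvature of $G_i$ and $k_i=\sum_{x\in V_i}K_{G_i}(x)$ its total curvature; (C1) $Z:=\big(2+\frac{k_1}{n_1}\big)\big(2+\frac{k_2}{n_2}\big)\neq 4$; (C3) $k_u:=K_{G_1}(u)\neq 0$ and $k_v:=K_{G_2}(v)\neq 0$. Then $D_G$ is invertible and the Steinerberger curvature $K_G=(n_1+n_2)D_G^{-1}\mathbf{1}_{n_1+n_2}$ of $G$ satisfies $$K_G(x)=\alpha K_{G_1}(x)\ \ (x\in V_1\setminus\{u\}),\qquad K_G(y)=\beta K_{G_2}(y)\ \ (y\in V_2\setminus\{v\}),$$ $$K_G(u)=\gamma k_u,\qquad K_G(v)=\delta k_v,$$ where $$\alpha=\frac{2(n_1+n_2)k_2}{n_1n_2(Z-4)},\quad \beta=\frac{2(n_1+n_2)k_1}{n_1n_2(Z-4)},\quad \gamma=\Big(1-\frac{k_1}{2k_u}\Big)\alpha,\quad \delta=\Big(1-\frac{k_2}{2k_v}\Big)\beta.$$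
   Context: All graphs are finite, simple, connected and undirected, with the combinatorial shortest-path distance $d$. For $G=(V,E)$ with $V=\{v_1,\dots,v_n\}$, let $D=(d(v_i,v_j))_{i,j=1}^n$ be its distance matrix and $\mathbf{1}_n\in\mathbb{R}^n$ the all-ones column vector. The Steinerberger curvature $K\in\mathbb{R}^n$ (written $K_i$ or $K(v_i)$) is defined as follows: if $DK=n\mathbf{1}_n$ has a unique solution, $K$ is that solution; if it has several solutions, $K$ is a solution for which $\min_i K_i$ is maximal; if it has no solution, $K=nD^\dagger\mathbf{1}_n$ with $D^\dagger$ the Moore–Penrose pseudoinverse. The total curvature of a vertex subset $W$ is $K(W)=\sum_{w\in W}K(w)$. *)

From HB Require Import structures.
From mathcomp Require Import all_boot all_order all_algebra.
Set Implicit Arguments. Unset Strict Implicit. Unset Printing Implicit Defensive.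
Import Order.TTheory GRing.Theory Num.Theory.

Definition simple_graph n (e : rel 'I_n) : Prop := symmetric e /\ irreflexive e.
Definition connected_graph n (e : rel 'I_n) : Prop := forall x y, connect e x y.

Fixpoint reach n (e : rel 'I_n) (k : nat) (x y : 'I_n) : bool :=
  if k is k'.+1 then reach e k' x y || [exists z, reach e k' x z && e z y]
  else x == y.

(* Shortest-path distance: the number of k in {0,..,n-1} such that y is not
   reachable from x by a walk of length <= k.  In a connected graph on n
   vertices the distance is <= n-1, so this is exactly d(x,y). *)
Definition gdist n (e : rel 'I_n) (x y : 'I_n) : nat :=
  \sum_(k < n) nat_of_bool (~~ reach e k x y).

Local Open Scope ring_scope.

Definition dist_mx (R : nzRingType) n (e : rel 'I_n) : 'M[R]_n :=
  \matrix_(i, j) (gdist e i j)%:R.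

Definition curv_inv (R : fieldType) n (D : 'M[R]_n) : 'cV[R]_n :=
  n%:R *: (invmx D *m const_mx 1).

Definition total_curv (R : fieldType) n (K : 'cV[R]_n) : R := \sum_i K i 0.

(* The graph G obtained from G1 (on 'I_n1) and G2 (on 'I_n2) by adding the
   edge {u,v}: vertices of G1 are lshift n2 x, vertices of G2 are rshift n1 y. *)
Definition glue n1 n2 (e1 : rel 'I_n1) (e2 : rel 'I_n2) (u : 'I_n1) (v : 'I_n2)
  : rel 'I_(n1 + n2) :=
  fun x y =>
    match split x, split y with
    | inl a, inl b => e1 a b
    | inr a, inr b => e2 a b
    | inl a, inr b => (a == u) && (b == v)
    | inr a, inl b => (b == u) && (a == v)
    end.

From HB Require Import structures.
From mathcomp Require Import all_boot all_order all_algebra.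
From mathcomp Require Import zify ring.
Set Implicit Arguments. Unset Strict Implicit. Unset Printing Implicit Defensive.
Import Order.TTheory GRing.Theory Num.Theory.

(** Across the bridge, d(x, y) = d1(x, u) + 1 + d2(v, y), so D_G is the block
    matrix with diagonal blocks D1, D2 and off-diagonal blocks of the form
    a_x + 1 + b_y.  Put w_i = D_i^-1 1 and σ_i = Σ w_i = k_i / n_i, so that
    Z - 4 = 2 σ1 + 2 σ2 + σ1 σ2.  If D_G (p, q) = 0, the first block row says
    D1 p = -(s + t) 1 - s D1 e_u with s = Σ q, t = (D2 q)_v, hence
    p = -(s + t) w1 - s e_u, and symmetrically for q; the four scalars then
    satisfy a 2 x 2 linear system of determinant Z - 4, so p = q = 0.  Finally
    D_G (2 σ2 w1 - σ1 σ2 e_u, 2 σ1 w2 - σ1 σ2 e_v) = (Z - 4) 1 by direct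
    computation, which yields K_G = (n1 + n2) / (Z - 4) times this vector. *)

Section Reach.
Variables (n : nat) (e : rel 'I_n).

Lemma reach_le k k' x y : k <= k' -> reach e k x y -> reach e k' x y.
Proof.
move=> /subnKC <-; elim: (k' - k) => [|m IH]; first by rewrite addn0.
by rewrite addnS /= => /IH ->.
Qed.

Lemma reach_step k x z y : reach e k x z -> e z y -> reach e k.+1 x y.
Proof. by move=> xz zy /=; apply/orP; right; apply/existsP; exists z; rewrite xz. Qed.

Lemma reach_path x p : path e x p -> reach e (size p) x (last x p).
Proof.
elim/last_ind: p => [|p z IH] /=; first by rewrite eqxx.
rewrite rcons_path size_rcons last_rcons => /andP[/IH xp pz].
exact: reach_step xp pz.
Qed.

Lemma reach_connect x y : connect e x y -> reach e n.-1 x y.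
Proof.
case/connectP => p xp ->; case: (shortenP xp) => p' xp' up' _.
apply: reach_le (reach_path xp').
have := max_card (mem (x :: p')); rewrite card_ord (card_uniqP up') /=; lia.
Qed.

Lemma reachE_dist (d : 'I_n -> 'I_n -> nat) :
  (forall x y, (d x y == 0) = (x == y)) ->
  (forall x z y, e z y -> d x y <= (d x z).+1) ->
  (forall x y m, d x y = m.+1 -> exists2 z, e z y & d x z = m) ->
  forall k x y, reach e k x y = (d x y <= k).
Proof.
move=> d0 d_edge d_pred; elim=> [|k IH] x y /=; first by rewrite leqn0 d0.
rewrite IH; apply/idP/idP.
  case/orP => [/leqW // | /existsP[z /andP[]]].
  by rewrite IH => xz /(d_edge x) xy; apply: leq_trans xy _.
rewrite leq_eqVlt ltnS => /orP[/eqP /d_pred[z zy xz] | ->] //.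
by apply/orP; right; apply/existsP; exists z; rewrite IH xz leqnn.
Qed.

Lemma sum_ord_ltn d m : \sum_(k < m) (k < d) = minn d m.
Proof.
elim: m => [|m IH]; first by rewrite big_ord0; lia.
by rewrite big_ord_recr /= IH; case: (ltnP m d) => /=; lia.
Qed.

Lemma gdistE_reach d x y :
  (forall k, reach e k x y = (d <= k)) -> d < n -> gdist e x y = d.
Proof.
move=> reachE dn.
rewrite /gdist (eq_bigr (fun k : 'I_n => nat_of_bool (k < d))).
  by rewrite sum_ord_ltn; lia.
by move=> k _; rewrite reachE -ltnNge.
Qed.

Hypothesis conn : connected_graph e.

Lemma reach_gdist k x y : reach e k x y = (gdist e x y <= k).
Proof.
have ex_reach : exists k, reach e k x y by exists n.-1; exact: reach_connect.
have [m reach_m m_min] := ex_minnP ex_reach.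
have reachE j : reach e j x y = (m <= j).
  by apply/idP/idP => [/m_min // | m_j]; apply: reach_le m_j reach_m.
rewrite (gdistE_reach reachE) //.
have := m_min _ (reach_connect (conn x y)); have := ltn_ord x; lia.
Qed.

Lemma gdist_lt x y : gdist e x y < n.
Proof.
have := reach_connect (conn x y); rewrite reach_gdist; have := ltn_ord x; lia.
Qed.

Lemma gdist_eq0 x y : (gdist e x y == 0) = (x == y).
Proof. by rewrite -leqn0 -reach_gdist. Qed.

Lemma gdistxx x : gdist e x x = 0.
Proof. by apply/eqP; rewrite gdist_eq0. Qed.

Lemma gdist_edge x z y : e z y -> gdist e x y <= (gdist e x z).+1.
Proof. by move=> zy; rewrite -reach_gdist (reach_step _ zy) ?reach_gdist. Qed.

Lemma gdist_pred x y m :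
  gdist e x y = m.+1 -> exists2 z, e z y & gdist e x z = m.
Proof.
move=> xy; have /= := reach_gdist m.+1 x y; rewrite xy leqnn reach_gdist xy ltnn.
case/existsP=> z /andP[]; rewrite reach_gdist => xz zy; exists z => //.
by have := gdist_edge x zy; rewrite xy; lia.
Qed.
End Reach.

Lemma split_lshift m n (x : 'I_m) : split (lshift n x) = inl x.
Proof. exact: (unsplitK (inl _ x)). Qed.

Lemma split_rshift m n (y : 'I_n) : split (rshift m y) = inr y.
Proof. exact: (unsplitK (inr _ y)). Qed.

Section GlueDist.
Variables (n1 n2 : nat) (e1 : rel 'I_n1) (e2 : rel 'I_n2) (u : 'I_n1) (v : 'I_n2).
Hypotheses (conn1 : connected_graph e1) (conn2 : connected_graph e2).

Definition glue_dist (a b : 'I_(n1 + n2)) : nat :=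
  match split a, split b with
  | inl x, inl y => gdist e1 x y
  | inr x, inr y => gdist e2 x y
  | inl x, inr y => gdist e1 x u + 1 + gdist e2 v y
  | inr x, inl y => gdist e2 x v + 1 + gdist e1 u y
  end.

Lemma glue_dist_eq0 a b : (glue_dist a b == 0) = (a == b).
Proof.
case: (split_ordP a) => x ->; case: (split_ordP b) => y ->;
  rewrite /glue_dist !(split_lshift, split_rshift) ?addn1 ?addnS //.
- by rewrite gdist_eq0 // (inj_eq (@lshift_inj _ _)).
- by apply/esym/eqP => /eqP; rewrite eq_lrshift.
- by apply/esym/eqP => /eqP; rewrite eq_rlshift.
- by rewrite gdist_eq0 // (inj_eq (@rshift_inj _ _)).
Qed.

Lemma glue_dist_edge a c b :
  glue e1 e2 u v c b -> glue_dist a b <= (glue_dist a c).+1.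
Proof.
rewrite /glue_dist /glue.
case: (split a) => x; case: (split c) => z; case: (split b) => y //.
- exact: gdist_edge.
- by case/andP => /eqP -> /eqP ->; rewrite gdistxx //; lia.
- by case/andP => /eqP -> /eqP ->; lia.
- by move/(gdist_edge conn2 v); lia.
- by move/(gdist_edge conn1 u); lia.
- by case/andP => /eqP -> /eqP ->; lia.
- by case/andP => /eqP -> /eqP ->; rewrite gdistxx //; lia.
- exact: gdist_edge.
Qed.

Lemma glue_dist_pred a b m :
  glue_dist a b = m.+1 -> exists2 c, glue e1 e2 u v c b & glue_dist a c = m.
Proof.
case: (split_ordP a) => x ->; case: (split_ordP b) => y ->;
  rewrite /glue_dist /glue !(split_lshift, split_rshift).
- case/(gdist_pred conn1) => z zy <-.
  by exists (lshift n2 z); rewrite /glue ?(split_lshift, split_rshift).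
- case vy: (gdist e2 v y) => [|j] xy.
    move/eqP: vy; rewrite gdist_eq0 // => /eqP <-.
    exists (lshift n2 u); rewrite /glue ?(split_lshift, split_rshift) ?eqxx //.
    lia.
  case/(gdist_pred conn2): vy => z zy vz.
  by exists (rshift n1 z); rewrite /glue ?(split_lshift, split_rshift) //; lia.
- case uy: (gdist e1 u y) => [|j] xy.
    move/eqP: uy; rewrite gdist_eq0 // => /eqP <-.
    exists (rshift n1 v); rewrite /glue ?(split_lshift, split_rshift) ?eqxx //.
    lia.
  case/(gdist_pred conn1): uy => z zy uz.
  by exists (lshift n2 z); rewrite /glue ?(split_lshift, split_rshift) //; lia.
- case/(gdist_pred conn2) => z zy <-.
  by exists (rshift n1 z); rewrite /glue ?(split_lshift, split_rshift).
Qed.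

Lemma gdist_glue a b : gdist (glue e1 e2 u v) a b = glue_dist a b.
Proof.
apply: gdistE_reach; first by move=> k; apply: reachE_dist;
  [exact: glue_dist_eq0 | exact: glue_dist_edge | exact: glue_dist_pred].
case: (split_ordP a) => x ->; case: (split_ordP b) => y ->;
  rewrite /glue_dist !(split_lshift, split_rshift).
- by have := gdist_lt conn1 x y; lia.
- by have := gdist_lt conn1 x u; have := gdist_lt conn2 v y; lia.
- by have := gdist_lt conn2 x v; have := gdist_lt conn1 u y; lia.
- by have := gdist_lt conn2 x y; lia.
Qed.
End GlueDist.

Local Open Scope ring_scope.

Lemma curv_invE (F : fieldType) n (D : 'M[F]_n) i :
  curv_inv D i 0 = n%:R * (invmx D *m (const_mx 1 : 'cV_n)) i 0.
Proof. by rewrite [LHS]mxE. Qed.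

Lemma total_curv_inv (F : fieldType) n (D : 'M[F]_n) :
  total_curv (curv_inv D) = n%:R * \sum_i (invmx D *m (const_mx 1 : 'cV_n)) i 0.
Proof. by rewrite mulr_sumr; apply: eq_bigr => i _; rewrite curv_invE. Qed.

Lemma col_inj_unitmx (F : fieldType) n (A : 'M[F]_n) :
  (forall p : 'cV_n, A *m p = 0 -> p = 0) -> A \in unitmx.
Proof.
move=> Ainj; rewrite -unitmx_tr -row_free_unit; apply: inj_row_free => r rA0.
apply: trmx_inj; rewrite trmx0; apply: Ainj.
by rewrite -[A]trmxK -trmx_mul rA0 trmx0.
Qed.

Lemma cramer2_eq0 (F : fieldType) (a b c d x y : F) :
  a * d - b * c != 0 -> a * x + b * y = 0 -> c * x + d * y = 0 -> x = 0 /\ y = 0.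
Proof.
move=> det0 E1 E2; split; apply: (mulIf det0); rewrite mul0r.
- transitivity (d * (a * x + b * y) - b * (c * x + d * y)); first ring.
  by rewrite E1 E2 !mulr0 subrr.
- transitivity (a * (c * x + d * y) - c * (a * x + b * y)); first ring.
  by rewrite E1 E2 !mulr0 subrr.
Qed.

Lemma glue_scalar_eq0 (F : fieldType) (σ1 σ2 s t s' t' : F) :
  2 * σ1 + 2 * σ2 + σ1 * σ2 != 0 ->
  s' = - (s + t) * σ1 - s -> t' = - (s + t) ->
  s = - (s' + t') * σ2 - s' -> t = - (s' + t') ->
  [/\ s = 0, t = 0, s' = 0 & t' = 0].
Proof.
move=> ζ0 -> -> Es Et.
have Et0 : (2 + σ1) * s + σ1 * t = 0 by rewrite -(subrr t) {2}Et; ring.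
have Es0 : (2 * σ2 + σ1 * σ2 + σ1) * s + (σ2 + σ1 * σ2 + σ1) * t = 0.
  by rewrite -(subrr s) {2}Es; ring.
have [|-> ->] := cramer2_eq0 _ Et0 Es0; last by split; ring.
by rewrite (_ : _ - _ = 2 * σ1 + 2 * σ2 + σ1 * σ2) //; ring.
Qed.

Section UnitBlock.
Variables (F : fieldType) (n : nat) (D : 'M[F]_n) (u : 'I_n).
Hypotheses (Duu : D u u = 0) (Dunit : D \in unitmx).
Let w : 'cV[F]_n := invmx D *m const_mx 1.

Lemma mulmx_invmx1_delta (a c : F) :
  D *m (a *: w - c *: delta_mx u 0) = a *: const_mx 1 - c *: col u D.
Proof. by rewrite mulmxBr -!scalemxAr mulKVmx // colE. Qed.

Lemma mulmx_invmx1_delta_at (a c : F) : (D *m (a *: w - c *: delta_mx u 0)) u 0 = a.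
Proof. by rewrite mulmx_invmx1_delta !mxE Duu mulr0 mulr1 subr0. Qed.

Lemma sum_invmx1_delta (a c : F) :
  \sum_i (a *: w - c *: delta_mx u 0) i 0 = a * \sum_i w i 0 - c.
Proof.
rewrite (eq_bigr (fun i => a * w i 0 - c * (i == u)%:R)) => [|i _]; last first.
  by rewrite !mxE eqxx andbT.
rewrite sumrB -mulr_sumr; congr (_ - _).
by rewrite (bigD1 u) //= eqxx mulr1 big1 ?addr0 // => i /negPf->; rewrite mulr0.
Qed.

Lemma mulmx_eq0_invmx1_delta p (s t : F) :
  D *m p + s *: (col u D + const_mx 1) + t *: const_mx 1 = 0 ->
  p = (- (s + t)) *: w - s *: delta_mx u 0.
Proof.
move=> Dp0; apply: (can_inj (mulKmx Dunit)); rewrite mulmx_invmx1_delta.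
move/eqP: Dp0; rewrite -addrA addr_eq0 => /eqP ->.
by apply/matrixP => i j; rewrite !mxE; ring.
Qed.
End UnitBlock.

Definition glue_mx (R : nzRingType) n1 n2 (D1 : 'M[R]_n1) (D2 : 'M[R]_n2) u v :=
  block_mx D1 (\matrix_(x, y) (D1 x u + 1 + D2 v y))
           (\matrix_(y, x) (D2 y v + 1 + D1 u x)) D2.

Section GlueMx.
Variables (F : fieldType) (n1 n2 : nat) (D1 : 'M[F]_n1) (D2 : 'M[F]_n2).
Variables (u : 'I_n1) (v : 'I_n2).
Local Notation glue_mx := (glue_mx D1 D2 u v).

Lemma mul_separable_mx m n (a : 'I_m -> F) c (b : 'I_n -> F) (q : 'cV[F]_n) :
  (\matrix_(i, j) (a i + c + b j)) *m q =
  (\sum_j q j 0) *: \col_i (a i + c) + (\sum_j b j * q j 0) *: const_mx 1.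
Proof.
apply/matrixP => i k; rewrite (ord1 k) !mxE !mulr_suml -big_split /=.
by apply: eq_bigr => j _; rewrite !mxE; ring.
Qed.

Lemma glue_mx_mul p q :
  glue_mx *m col_mx p q = col_mx
    (D1 *m p + (\sum_j q j 0) *: (col u D1 + const_mx 1)
       + (D2 *m q) v 0 *: const_mx 1)
    (D2 *m q + (\sum_i p i 0) *: (col v D2 + const_mx 1)
       + (D1 *m p) u 0 *: const_mx 1).
Proof.
have colE1 m (D : 'M[F]_m) x : \col_i (D i x + 1) = col x D + const_mx 1.
  by apply/matrixP => i j; rewrite !mxE.
rewrite mul_block_col !mul_separable_mx !colE1 !mxE.
by congr col_mx; [rewrite addrA | rewrite addrC addrA].
Qed.

Hypotheses (D1uu : D1 u u = 0) (D2vv : D2 v v = 0).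
Hypotheses (U1 : D1 \in unitmx) (U2 : D2 \in unitmx).
Let w1 : 'cV[F]_n1 := invmx D1 *m const_mx 1.
Let w2 : 'cV[F]_n2 := invmx D2 *m const_mx 1.
Let σ1 := \sum_i w1 i 0.
Let σ2 := \sum_i w2 i 0.
Hypothesis ζ0 : 2 * σ1 + 2 * σ2 + σ1 * σ2 != 0.

Lemma glue_mx_unit : glue_mx \in unitmx.
Proof.
apply: col_inj_unitmx => pq; rewrite -[pq]vsubmxK.
move: (usubmx pq) (dsubmx pq) => p q; rewrite glue_mx_mul => /eqP.
rewrite col_mx_eq0 => /andP[/eqP /(mulmx_eq0_invmx1_delta U1) pE].
move=> /eqP /(mulmx_eq0_invmx1_delta U2) qE.
have Es' : \sum_i p i 0 = - (\sum_j q j 0 + (D2 *m q) v 0) * σ1 - \sum_j q j 0.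
  by rewrite pE sum_invmx1_delta.
have Et' : (D1 *m p) u 0 = - (\sum_j q j 0 + (D2 *m q) v 0).
  by rewrite pE mulmx_invmx1_delta_at.
have Es : \sum_j q j 0 = - (\sum_i p i 0 + (D1 *m p) u 0) * σ2 - \sum_i p i 0.
  by rewrite {1}qE sum_invmx1_delta.
have Et : (D2 *m q) v 0 = - (\sum_i p i 0 + (D1 *m p) u 0).
  by rewrite {1}qE mulmx_invmx1_delta_at.
have [s0 t0 s'0 t'0] := glue_scalar_eq0 ζ0 Es' Et' Es Et.
move: pE qE; rewrite s0 t0 s'0 t'0 => -> ->.
by rewrite !(addr0, oppr0, scale0r, subr0) col_mx0.
Qed.

Lemma glue_mx_mul_solution :
  glue_mx *m col_mx (2 * σ2 *: w1 - σ1 * σ2 *: delta_mx u 0)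
                    (2 * σ1 *: w2 - σ1 * σ2 *: delta_mx v 0)
  = (2 * σ1 + 2 * σ2 + σ1 * σ2) *: const_mx 1.
Proof.
rewrite glue_mx_mul !mulmx_invmx1_delta_at // !sum_invmx1_delta !mulmx_invmx1_delta //.
rewrite -col_mx_const scale_col_mx.
by congr col_mx; apply/matrixP => i j; rewrite !mxE -/w1 -/w2 -/σ1 -/σ2; ring.
Qed.

Lemma glue_mx_inv1 :
  invmx glue_mx *m const_mx 1 = (2 * σ1 + 2 * σ2 + σ1 * σ2)^-1 *:
    col_mx (2 * σ2 *: w1 - σ1 * σ2 *: delta_mx u 0)
           (2 * σ1 *: w2 - σ1 * σ2 *: delta_mx v 0).
Proof.
by rewrite -(scalerK ζ0 (const_mx 1)) -scalemxAr -glue_mx_mul_solution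
  mulKmx // glue_mx_unit.
Qed.

Lemma curv_glue_mx_lshift x :
  curv_inv glue_mx (lshift n2 x) 0 = (n1 + n2)%:R / (2 * σ1 + 2 * σ2 + σ1 * σ2)
    * (2 * σ2 * w1 x 0 - σ1 * σ2 * (x == u)%:R).
Proof. by rewrite /curv_inv glue_mx_inv1 !(col_mxEu, mxE) eqxx andbT; ring. Qed.

Lemma curv_glue_mx_rshift y :
  curv_inv glue_mx (rshift n1 y) 0 = (n1 + n2)%:R / (2 * σ1 + 2 * σ2 + σ1 * σ2)
    * (2 * σ1 * w2 y 0 - σ1 * σ2 * (y == v)%:R).
Proof. by rewrite /curv_inv glue_mx_inv1 !(col_mxEd, mxE) eqxx andbT; ring. Qed.
End GlueMx.

Lemma dist_mx_diag (R : nzRingType) n (e : rel 'I_n) x :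
  connected_graph e -> dist_mx R e x x = 0.
Proof. by move=> conn; rewrite mxE gdistxx. Qed.

Lemma dist_mx_glue (R : nzRingType) n1 n2 (e1 : rel 'I_n1) (e2 : rel 'I_n2) u v :
  connected_graph e1 -> connected_graph e2 ->
  dist_mx R (glue e1 e2 u v) = glue_mx (dist_mx R e1) (dist_mx R e2) u v.
Proof.
move=> conn1 conn2; apply/matrixP => a b.
by case: (split_ordP a) => x ->; case: (split_ordP b) => y ->;
  rewrite ?(block_mxEul, block_mxEur, block_mxEdl, block_mxEdr) !mxE gdist_glue //
    /glue_dist !(split_lshift, split_rshift) ?natrD.
Qed.

Theorem mainTheorem5 (R : realFieldType) (n1 n2 : nat)
  (e1 : rel 'I_n1) (e2 : rel 'I_n2) (u : 'I_n1) (v : 'I_n2) :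
  (2 <= n1)%N -> (2 <= n2)%N ->
  simple_graph e1 -> simple_graph e2 ->
  connected_graph e1 -> connected_graph e2 ->
  let D1 : 'M[R]_n1 := dist_mx R e1 in
  let D2 : 'M[R]_n2 := dist_mx R e2 in
  let DG : 'M[R]_(n1 + n2) := dist_mx R (glue e1 e2 u v) in
  D1 \in unitmx -> D2 \in unitmx ->
  let K1 := curv_inv D1 in
  let K2 := curv_inv D2 in
  let k1 := total_curv K1 in
  let k2 := total_curv K2 in
  let Z := (2 + k1 / n1%:R) * (2 + k2 / n2%:R) in
  Z != 4 ->
  let ku := K1 u 0 in
  let kv := K2 v 0 in
  ku != 0 -> kv != 0 ->
  let alpha := 2 * (n1 + n2)%:R * k2 / (n1%:R * n2%:R * (Z - 4)) in
  let beta := 2 * (n1 + n2)%:R * k1 / (n1%:R * n2%:R * (Z - 4)) in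
  let gamma := (1 - k1 / (2 * ku)) * alpha in
  let delta := (1 - k2 / (2 * kv)) * beta in
  DG \in unitmx /\
  let KG := curv_inv DG in
  (forall x : 'I_n1, x != u -> KG (lshift n2 x) 0 = alpha * K1 x 0) /\
  (forall y : 'I_n2, y != v -> KG (rshift n1 y) 0 = beta * K2 y 0) /\
  KG (lshift n2 u) 0 = gamma * ku /\
  KG (rshift n1 v) 0 = delta * kv.
Proof.
move=> n1_ge2 n2_ge2 _ _ conn1 conn2 D1 D2 DG U1 U2 K1 K2 k1 k2 Z Z4 ku kv
  ku0 kv0 alpha beta gamma delta.
have n1_0 : n1%:R != 0 :> R by rewrite pnatr_eq0; lia.
have n2_0 : n2%:R != 0 :> R by rewrite pnatr_eq0; lia.
have DGE : DG = glue_mx D1 D2 u v by exact: dist_mx_glue.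
have D1uu : D1 u u = 0 by exact: dist_mx_diag.
have D2vv : D2 v v = 0 by exact: dist_mx_diag.
pose w1 : 'cV[R]_n1 := invmx D1 *m const_mx 1.
pose w2 : 'cV[R]_n2 := invmx D2 *m const_mx 1.
pose σ1 := \sum_i w1 i 0; pose σ2 := \sum_i w2 i 0.
have k1E : k1 = n1%:R * σ1 by exact: total_curv_inv.
have k2E : k2 = n2%:R * σ2 by exact: total_curv_inv.
have ZE : Z - 4 = 2 * σ1 + 2 * σ2 + σ1 * σ2.
  by rewrite /Z k1E k2E ![_%:R * _]mulrC !mulfK //; ring.
have ζ0 : 2 * σ1 + 2 * σ2 + σ1 * σ2 != 0 by rewrite -ZE subr_eq0.
have kuE : ku = n1%:R * w1 u 0 by exact: curv_invE.
have kvE : kv = n2%:R * w2 v 0 by exact: curv_invE.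
split; first by rewrite DGE glue_mx_unit.
rewrite /gamma /delta /alpha /beta ZE k1E k2E kuE kvE.
rewrite kuE mulf_eq0 negb_or n1_0 /= in ku0.
rewrite kvE mulf_eq0 negb_or n2_0 /= in kv0.
split; [|split; [|split]] => [x /negPf xu|y /negPf yv||];
  rewrite DGE ?curv_glue_mx_lshift ?curv_glue_mx_rshift // ?curv_invE
    ?xu ?yv ?eqxx -/w1 -/w2 -/σ1 -/σ2 /= ?mulr0 ?subr0.
- by field; rewrite n1_0 n2_0 ζ0.
- by field; rewrite n1_0 n2_0 ζ0.
- by field; rewrite n1_0 n2_0 ζ0 ku0.
- by field; rewrite n1_0 n2_0 ζ0 kv0.
Qed.
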